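(* For any infinite word $w$ over a finite alphabet $A$ and any graph $H$ on $A$ with loops allowed, the class $\mathcal{X}=\mathcal{P}(w,H)$ has finite distinguishing number.
   Context: For positive integers $u_1<\dots<u_m$, $G_{w,H}(u_1,\dots,u_m)$ is the graph on $\{u_1,\dots,u_m\}$ in which $u_iu_j$ is an edge iff ($|u_i-u_j|=1$ and $w_{u_i}w_{u_j}\notin E(H)$) or ($|u_i-u_j|>1$ and $w_{u_i}w_{u_j}\in E(H)$) (for equal letters $a$, a loop at $a$). $\mathcal{P}(w,H)$ is the class of all graphs isomorphic to some $G_{w,H}(u_1,\dots,u_m)$. Distinguishing number: for $X\subseteq V(G)$, disjoint sets $U_1,\dots,U_m$ are distinguished by $X$ if vertices in the same $U_i$ have the same neighbourhood in $X$ and vertices in different $U_i$ have different neighbourhoods in $X$. $k_{\mathcal{X}}=\infty$ if for all $k,m$ some $G\in\mathcal{X}$ and $X\subseteq V(G)$ distinguish at least $m$ sets of size at least $k$; otherwise $k_{\mathcal{X}}$ is finite (the least $k$ such that for some $m$ no vertex subset of a graph in $\mathcal{X}$ distinguishes more than $m$ sets of size at least $k$). *)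

From mathcomp Require Import all_boot.
Set Implicit Arguments. Unset Strict Implicit. Unset Printing Implicit Defensive.

(* A graph on the alphabet A with loops allowed: a symmetric relation H;
   H a a means a loop at a. *)
Definition sym_rel (A : Type) (H : rel A) : Prop := forall a b, H a b = H b a.

Definition absdiff (p q : nat) : nat := (p - q) + (q - p).

Definition GwH_edge (A : Type) (w : nat -> A) (H : rel A) (p q : nat) : bool :=
  ((absdiff p q == 1) && ~~ H (w p) (w q)) || ((1 < absdiff p q) && H (w p) (w q)).

(* (T, e) belongs to P(w,H): it is isomorphic to G_{w,H}(u_1,...,u_m) for some
   positive integers u_1 < ... < u_m, namely the image of the injection f. *)
Definition in_PwH (A : Type) (w : nat -> A) (H : rel A) (T : finType) (e : rel T)
  : Prop :=
  exists f : T -> nat,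
    [/\ injective f, (forall x, 0 < f x)
      & forall x y, e x y = (x != y) && GwH_edge w H (f x) (f y)].

Definition nbhd_in (T : finType) (e : rel T) (X : {set T}) (v : T) : {set T} :=
  [set y in X | e v y].

Definition distinguished (T : finType) (e : rel T) (X : {set T}) (n : nat)
  (U : 'I_n -> {set T}) : Prop :=
  [/\ (forall i j, i != j -> [disjoint U i & U j]),
      (forall i x y, x \in U i -> y \in U i -> nbhd_in e X x = nbhd_in e X y)
    & (forall i j x y, i != j -> x \in U i -> y \in U j ->
          nbhd_in e X x != nbhd_in e X y)].

Definition finite_dist_number_PwH (A : Type) (w : nat -> A) (H : rel A) : Prop :=
  exists k m : nat, forall (T : finType) (e : rel T), in_PwH w H e ->
    forall (X : {set T}) (n : nat) (U : 'I_n -> {set T}),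
      distinguished e X U -> (forall i, k <= #|U i|) -> n <= m.

From mathcomp Require Import all_boot.
From mathcomp Require Import zify.
Set Implicit Arguments. Unset Strict Implicit. Unset Printing Implicit Defensive.

(* Two vertices u, v of G_{w,H} carrying the same letter a and lying at distance
   at least 3 in N see every other position y from afar: y is non-adjacent in N
   to u or to v, and there the edge uy (resp. vy) is just H a (w y).  So if u and
   v have the same neighbourhood in X, that neighbourhood is {y in X | H a (w y)}.
   A large set U_i contains such a pair (pigeonhole on letters, then injectivity
   of the positions), hence its common neighbourhood is determined by a letter;
   distinguished sets have distinct neighbourhoods, so there are at most |A| of
   them. *)

Lemma exists_far_pair (T : finType) (f : T -> nat) (S : {set T}) :
  injective f -> 5 < #|S| -> exists u v, [/\ u \in S, v \in S & f u + 3 <= f v].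
Proof.
move=> finj hS.
have [u uS] : exists u, u \in S.
  by apply/set0Pn; rewrite -card_gt0; apply: leq_trans hS.
case: (boolP [exists v in S, (f u + 3 <= f v) || (f v + 3 <= f u)]).
  case/exists_inP => v vS /orP [h|h]; first by exists u, v.
  by exists v, u.
move/exists_inPn => near_u.
have : size (map f (enum S)) <= size (iota (f u - 2) 5).
  apply: uniq_leq_size; first by rewrite map_inj_uniq ?enum_uniq.
  move=> z /mapP [x]; rewrite mem_enum => xS ->.
  have := near_u x xS; rewrite negb_or => /andP [h1 h2].
  rewrite mem_iota; apply/andP; split; lia.
by rewrite size_map -cardE size_iota; lia.
Qed.

Lemma exists_large_fiber (T A : finType) (g : T -> A) (S : {set T}) (k : nat) :
  (k * #|A|).+1 <= #|S| -> exists a, k < #|[set x in S | g x == a]|.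
Proof.
move=> hS; apply/existsP; apply: contraLR hS => /existsPn small_fibers.
rewrite -leqNgt -sum1_card (partition_big g predT) //=.
apply: (@leq_trans (\sum_(a : A) k)); last by rewrite sum_nat_const mulnC.
apply: leq_sum => a _; have := small_fibers a; rewrite -leqNgt; apply: leq_trans.
by rewrite -sum1_card; apply/eq_leq/eq_bigl => x; rewrite !inE.
Qed.

Lemma absdiff_far_from_one (p q y : nat) :
  p + 3 <= q -> (1 < absdiff p y) || (1 < absdiff q y).
Proof. by rewrite /absdiff; lia. Qed.

Lemma GwH_edge_far (A : Type) (w : nat -> A) (H : rel A) (p q : nat) :
  1 < absdiff p q -> GwH_edge w H p q = H (w p) (w q).
Proof. by rewrite /GwH_edge => hpq; rewrite hpq /=; case: eqP hpq => // ->. Qed.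

Section NeighbourhoodByLetter.

Variables (A : Type) (w : nat -> A) (H : rel A) (T : finType) (e : rel T).
Variable f : T -> nat.
Hypothesis edgeE : forall x y, e x y = (x != y) && GwH_edge w H (f x) (f y).

Lemma edge_far x y : 1 < absdiff (f x) (f y) -> e x y = H (w (f x)) (w (f y)).
Proof.
move=> far; rewrite edgeE GwH_edge_far //.
have -> // : x != y by apply/eqP => exy; move: far; rewrite exy /absdiff subnn.
Qed.

Lemma nbhd_in_far_pair (X : {set T}) (u v : T) (a : A) :
  w (f u) = a -> w (f v) = a -> f u + 3 <= f v ->
  nbhd_in e X u = nbhd_in e X v ->
  nbhd_in e X u = [set y in X | H a (w (f y))].
Proof.
move=> wu wv fuv same_uv; apply/setP => y; rewrite !inE.
case yX: (y \in X) => //=.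
have /orP [far_u | far_v] := absdiff_far_from_one (f y) fuv.
  by rewrite edge_far // wu.
have /setP /(_ y) := same_uv; rewrite !inE yX /= => ->.
by rewrite edge_far // wv.
Qed.

End NeighbourhoodByLetter.

Theorem lemma3p5 (A : finType) (w : nat -> A) (H : rel A) :
  sym_rel H -> finite_dist_number_PwH w H.
Proof.
move=> _; exists (5 * #|A|).+1, #|A| => T e [f [finj _ edgeE]] X n U
  [_ same differ] large.
have letter_of i : exists a : A,
    forall x, x \in U i -> nbhd_in e X x = [set y in X | H a (w (f y))].
  have [a big_fiber] := exists_large_fiber (fun x => w (f x)) (large i).
  have [u [v [+ + fuv]]] := exists_far_pair finj big_fiber.
  rewrite !inE => /andP [uU /eqP wu] /andP [vU /eqP wv].
  exists a => x xU; rewrite (same _ _ _ xU uU).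
  exact: (nbhd_in_far_pair edgeE wu wv fuv (same _ _ _ uU vU)).
have [g gP] := fin_all_exists letter_of.
have ginj : injective g.
  move=> i j gij; apply/eqP; apply: contraT => nij.
  have [x xU] : exists x, x \in U i.
    by apply/set0Pn; rewrite -card_gt0; apply: leq_trans (large i).
  have [y yU] : exists y, y \in U j.
    by apply/set0Pn; rewrite -card_gt0; apply: leq_trans (large j).
  by have := differ _ _ _ _ nij xU yU; rewrite (gP _ _ xU) (gP _ _ yU) gij eqxx.
by have := leq_card g ginj; rewrite card_ord.
Qed.
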